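(* Let $\nabla:\Omega(A)\to\Omega(A)\otimes_A\Omega(A)$ be a module connection with associated affine connection $(\mathsf K_\nabla,\mathsf H_\nabla)$ and torsion $\mathsf V$. Then for all $a\in A$, $2\,\widehat\nabla(\mathsf d(a))=\widehat\phi(\mathsf V(\mathsf d(a)))$.
   Context: Fix a commutative ring $R$ and a commutative $R$-algebra $A$; $\Omega(A)$ is the Kähler module of $A$ over $R$ with universal derivation $\mathsf d$, and $\Omega^2(A)=\Omega(A)\wedge_A\Omega(A)$. A module connection on $\Omega(A)$ is an $R$-linear $\nabla:\Omega(A)\to\Omega(A)\otimes_A\Omega(A)$ with $\nabla(a\alpha)=a\nabla(\alpha)+\mathsf d(a)\otimes\alpha$. $\mathsf T(A)=\mathrm{Sym}_A(\Omega(A))$ (which equals the symmetric algebra $\mathsf S_A(\Omega(A))$), $\mathsf T^2(A)=\mathsf T(\mathsf T(A))$ with universal derivation $\mathsf d':\mathsf T(A)\to\mathsf T^2(A)$, generated over $A$ by $\mathsf d(a),\mathsf d'(a),\mathsf d'\mathsf d(a)$; $\mathsf c_A:\mathsf T^2(A)\to\mathsf T^2(A)$ is the algebra map $a\mapsto a$, $\mathsf d(a)\mapsto\mathsf d'(a)$, $\mathsf d'(a)\mapsto\mathsf d(a)$, $\mathsf d'\mathsf d(a)\mapsto\mathsf d'\mathsf d(a)$. The associated affine connection (a tangent category connection on the tangent bundle of $A$ in affine schemes) has vertical part the algebra map $\mathsf K_\nabla:\mathsf T(A)\to\mathsf T^2(A)$, $a\mapsto a$, $\mathsf d(a)\mapsto\mathsf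 d'\mathsf d(a)-U'(\nabla(\mathsf d a))$, and horizontal part $\mathsf H_\nabla:\mathsf T^2(A)\to\mathsf T(A)\otimes_A\mathsf T(A)$ with $\mathsf H_\nabla(\mathsf d'\mathsf d(a))=\nabla(\mathsf d(a))$, where $U':\mathsf T(A)\otimes_A\mathsf T(A)\to\mathsf T^2(A)$ is the algebra map $w\otimes v\mapsto\mathsf T(\mathsf p_A)(w)\,v$ with $\mathsf T(\mathsf p_A)(a)=a$, $\mathsf T(\mathsf p_A)(\mathsf d a)=\mathsf d'(a)$ (so $\mathsf d(b)\otimes\mathsf d(c)\mapsto\mathsf d'(b)\mathsf d(c)$). The torsion of this affine connection (computed from the horizontal connection) is the algebra map $\mathsf V:\mathsf T(A)\to\mathsf T^2(A)$ with $\mathsf V(a)=a$ and $\mathsf V(\mathsf d(a))=\mathsf c_A\big(U'(\mathsf H_\nabla(\mathsf d'\mathsf d a))\big)-U'\big(\mathsf H_\nabla(\mathsf c_A(\mathsf d'\mathsf d a))\big)$; the connection is torsion-free if $\mathsf V(\mathsf d(a))=0$ for all $a\in A$. The torsion of $\nabla$ is $\widehat\nabla=\omega\circ\nabla:\Omega(A)\to\Omega^2(A)$ with $\omega(\alpha\otimes\beta)=\alpha\wedge\beta$. The map $\widehat\phi:\mathsf T^2(A)\to\Omega^2(A)$ is the additive map sending each monomial of the form $a\,\mathsf d(b)\mathsf d'(c)$ ($a,b,c\in A$) to $a\,\mathsf d(b)\wedge\mathsf d(c)$ and all monomials of other forms to $0$. *)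

(* Kähler modules, tensor products, exterior squares,
   symmetric algebras and tensor products of algebras are not in the
   library; they are specified here by their universal properties (they are
   therefore determined up to unique isomorphism), and the theorem is stated
   for every choice of such universal objects. *)
From HB Require Import structures.
From mathcomp Require Import all_boot all_order all_algebra.
Set Implicit Arguments.
Unset Strict Implicit.
Unset Printing Implicit Defensive.
Import GRing.Theory.
Local Open Scope ring_scope.

Definition additive_map (U V : zmodType) (f : U -> V) : Prop :=
  forall x y, f (x + y) = f x + f y.

Definition is_linear (S : pzRingType) (M N : lmodType S) (f : M -> N) : Prop :=
  additive_map f /\ (forall (k : S) x, f (k *: x) = k *: f x).

Definition is_bilinear (S : pzRingType) (M N P : lmodType S)
  (f : M -> N -> P) : Prop :=
  (forall y, is_linear (fun x => f x y)) /\ (forall x, is_linear (f x)).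

Definition is_ring_map (B C : pzRingType) (f : B -> C) : Prop :=
  additive_map f /\ (forall x y, f (x * y) = f x * f y) /\ f 1 = 1.

Definition is_alg_map (S : pzRingType) (B C : algType S) (f : B -> C) : Prop :=
  is_ring_map f /\ (forall (k : S) x, f (k *: x) = k *: f x).

(* [rho : R -> S] is the structure map of the R-algebra S.  An R-linear
   derivation D : S -> M (M an S-module) satisfying the Leibniz rule. *)
Definition is_derivation (R : comPzRingType) (S : comNzRingType)
  (rho : R -> S) (M : lmodType S) (D : S -> M) : Prop :=
  additive_map D /\
  (forall (r : R) (x : S), D (rho r * x) = rho r *: D x) /\
  (forall x y : S, D (x * y) = x *: D y + y *: D x).

Definition is_kahler (R : comPzRingType) (S : comNzRingType) (rho : R -> S)
  (Om : lmodType S) (d : S -> Om) : Prop :=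
  is_derivation rho d /\
  forall (M : lmodType S) (D : S -> M), is_derivation rho D ->
    exists f : Om -> M,
      [/\ is_linear f, (forall s, f (d s) = D s) &
          forall g : Om -> M, is_linear g -> (forall s, g (d s) = D s) ->
            forall x, g x = f x].

Definition is_tensor (S : pzRingType) (M N P : lmodType S)
  (t : M -> N -> P) : Prop :=
  is_bilinear t /\
  forall (Q : lmodType S) (f : M -> N -> Q), is_bilinear f ->
    exists g : P -> Q,
      [/\ is_linear g, (forall x y, g (t x y) = f x y) &
          forall h : P -> Q, is_linear h -> (forall x y, h (t x y) = f x y) ->
            forall z, h z = g z].

Definition is_ext_square (S : pzRingType) (M E : lmodType S)
  (w : M -> M -> E) : Prop :=
  [/\ is_bilinear w, (forall x, w x x = 0) &
  forall (Q : lmodType S) (f : M -> M -> Q), is_bilinear f ->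
    (forall x, f x x = 0) ->
    exists g : E -> Q,
      [/\ is_linear g, (forall x y, g (w x y) = f x y) &
          forall h : E -> Q, is_linear h -> (forall x y, h (w x y) = f x y) ->
            forall z, h z = g z]].

Definition is_sym_alg (S : comNzRingType) (M : lmodType S) (T : comAlgType S)
  (iota : M -> T) : Prop :=
  is_linear iota /\
  forall (B : comAlgType S) (f : M -> B), is_linear f ->
    exists g : T -> B,
      [/\ is_alg_map g, (forall x, g (iota x) = f x) &
          forall h : T -> B, is_alg_map h -> (forall x, h (iota x) = f x) ->
            forall z, h z = g z].

Definition is_alg_tensor (S : pzRingType) (B1 B2 T : comAlgType S)
  (i1 : B1 -> T) (i2 : B2 -> T) : Prop :=
  [/\ is_alg_map i1, is_alg_map i2 &
  forall (C : comAlgType S) (f1 : B1 -> C) (f2 : B2 -> C),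
    is_alg_map f1 -> is_alg_map f2 ->
    exists g : T -> C,
      [/\ is_alg_map g, (forall x, g (i1 x) = f1 x), (forall x, g (i2 x) = f2 x) &
          forall h : T -> C, is_alg_map h -> (forall x, h (i1 x) = f1 x) ->
            (forall x, h (i2 x) = f2 x) -> forall z, h z = g z]].

Definition is_module_connection (R : comPzRingType) (A : comAlgType R)
  (Om W : lmodType A) (d : A -> Om) (tens : Om -> Om -> W) (nabla : Om -> W)
  : Prop :=
  [/\ additive_map nabla,
      (forall (r : R) x, nabla ((r%:A : A) *: x) = (r%:A : A) *: nabla x) &
      (forall (a : A) x, nabla (a *: x) = a *: nabla x + tens (d a) x)].

(* generators d(b), d'(b), d'd(b) of T^2(A) over A *)
Inductive gen2 (A : Type) : Type :=
  | GD of A | GD' of A | GDD of A.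

Definition monomial2 (A : pzRingType) (T2 : pzRingType)
  (emb : A -> T2) (gval : gen2 A -> T2) (a : A) (s : seq (gen2 A)) : T2 :=
  emb a * \prod_(g <- s) gval g.

Definition form_d_d' (A : Type) (s : seq (gen2 A)) : Prop :=
  exists b c, s = [:: GD b; GD' c] \/ s = [:: GD' c; GD b].

(* torsion of the affine connection, evaluated at d(a):
   V(d a) = c_A(U'(H(d'd a))) - U'(H(c_A(d'd a))) *)
Definition torsionV (T2 TT : zmodType) (cA : T2 -> T2) (U' : TT -> T2)
  (H : T2 -> TT) (dd' : T2) : T2 :=
  cA (U' (H dd')) - U' (H (cA dd')).

(* the A-algebra structure of T^2(A) = Sym_{T(A)}(Omega(T(A))) *)
Definition T2emb (A : pzRingType) (TA : comAlgType A) (T2 : comAlgType TA)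
  (a : A) : T2 := ((a%:A : TA)%:A : T2).

Definition T2gen (A : pzRingType) (Om : lmodType A) (d : A -> Om)
  (TA : comAlgType A) (iota : Om -> TA) (OmT : lmodType TA) (d' : TA -> OmT)
  (T2 : comAlgType TA) (iota2 : OmT -> T2) (g : gen2 A) : T2 :=
  match g with
  | GD b => ((iota (d b))%:A : T2)
  | GD' b => iota2 (d' ((b%:A : TA)))
  | GDD b => iota2 (d' (iota (d b)))
  end.

(* Since c_A fixes d'd(a) and H sends it to m(nabla(d a)), the torsion is
   V(d a) = c_A(X) - X with X = U'(m(nabla(d a))).  Both t |-> 2 omega(t) and
   t |-> phi(c_A(U'(m t))) - phi(U'(m t)) are additive on Omega(A) (x) Omega(A),
   which is spanned by the elements k d(b) (x) d(c).  For such t we get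
   U'(m t) = k d'(b) d(c), whose flip is k d(b) d'(c), and phi sends the
   difference to k (d b /\ d c - d c /\ d b) = 2 omega(t).  Only
   nabla(d a) \in Omega(A) (x) Omega(A) matters, not the Leibniz rule of nabla. *)

From HB Require Import structures.
From mathcomp Require Import all_boot all_order all_algebra.
From Stdlib Require Import ClassicalEpsilon.
Set Implicit Arguments.
Unset Strict Implicit.
Unset Printing Implicit Defensive.
Import GRing.Theory.
Local Open Scope ring_scope.

Lemma additive_map0 (U V : zmodType) (f : U -> V) : additive_map f -> f 0 = 0.
Proof. by move=> fD; apply: (addrI (f 0)); rewrite -fD !addr0. Qed.

Lemma additive_mapB (U V : zmodType) (f : U -> V) :
  additive_map f -> forall x y, f (x - y) = f x - f y.
Proof. by move=> fD x y; apply: (addrI (f y)); rewrite -fD addrC subrK addrC subrK. Qed.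

Section Span.
Variables (S : pzRingType) (M : lmodType S) (G : M -> Prop).

Inductive span : M -> Prop :=
| span0 : span 0
| spanZG k x : G x -> span (k *: x)
| spanD x y : span x -> span y -> span (x + y).

Lemma spanG x : G x -> span x.
Proof. by move=> Gx; rewrite -[x]scale1r; apply: spanZG. Qed.

Lemma spanZ k x : span x -> span (k *: x).
Proof.
elim=> [|k' y Gy|y z _ IHy _ IHz].
- by rewrite scaler0; apply: span0.
- by rewrite scalerA; apply: spanZG.
- by rewrite scalerDr; apply: spanD.
Qed.

(* Deciding [span] classically makes it a boolean predicate, which is what
   carries a submodule structure. *)
Definition in_span : {pred M} :=
  fun x => if excluded_middle_informative (span x) then true else false.

Lemma in_spanP x : reflect (span x) (x \in in_span).
Proof.
by rewrite unfold_in /in_span; case: excluded_middle_informative => h; constructor.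
Qed.

Fact in_span_submod_closed : submod_closed in_span.
Proof.
split=> [|k x y /in_spanP Sx /in_spanP Sy]; apply/in_spanP; first exact: span0.
by apply: spanD => //; apply: spanZ.
Qed.
HB.instance Definition _ :=
  GRing.isSubmodClosed.Build S M in_span in_span_submod_closed.

Inductive span_sub : predArgType := SpanSub x & x \in in_span.
Definition span_val (u : span_sub) := let: SpanSub x _ := u in x.
HB.instance Definition _ := [isSub of span_sub for span_val].
HB.instance Definition _ := [Choice of span_sub by <:].
HB.instance Definition _ := [SubChoice_isSubZmodule of span_sub by <:].
HB.instance Definition _ := [SubZmodule_isSubLmodule of span_sub by <:].

Lemma is_linear_val_comp (P : lmodType S) (g : P -> span_sub) :
  is_linear g -> is_linear (val \o g).
Proof. by case=> gD gZ; split=> [u v|k u]; rewrite /= ?gD ?gZ. Qed.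

Lemma span_of_val_id (g : M -> span_sub) :
  (forall z, val (g z) = z) -> forall z, span z.
Proof. by move=> gK z; rewrite -[z]gK; apply/in_spanP; case: (g z). Qed.

End Span.

Lemma span_linear (S : pzRingType) (M N : lmodType S)
    (G : M -> Prop) (G' : N -> Prop) (f : M -> N) :
  is_linear f -> (forall x, G x -> span G' (f x)) ->
  forall x, span G x -> span G' (f x).
Proof.
case=> fD fZ fG x; elim=> [|k y Gy|y z _ IHy _ IHz].
- by rewrite (additive_map0 fD); apply: span0.
- by rewrite fZ; apply: spanZ; apply: fG.
- by rewrite fD; apply: spanD.
Qed.


(* Corestrict the universal map to the span: composed with [val] it is a
   linear map fixing the generators, so uniqueness makes it the identity. *)
Lemma tensor_span (S : pzRingType) (M N P : lmodType S) (t : M -> N -> P) :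
  is_tensor t -> forall z, span (fun w => exists x y, w = t x y) z.
Proof.
case=> tbil tuniv; set G := fun w => exists x y, w = t x y.
have tG x y : t x y \in in_span G by apply/in_spanP/spanG; exists x, y.
have gbil : is_bilinear (fun x y => SpanSub (tG x y)).
  have [tl tr] := tbil; split=> [y|x]; split=> [u v|k u]; apply: val_inj;
    by rewrite /= ?(proj1 (tl _)) ?(proj2 (tl _)) ?(proj1 (tr _)) ?(proj2 (tr _)).
have [g [glin gt _]] := tuniv _ _ gbil.
have [g0 [_ _ tid]] := tuniv P t tbil.
apply: (span_of_val_id (g := g)) => z.
transitivity (g0 z); last by rewrite -(tid (fun x => x)).
apply: (tid (val \o g)) => [|x y]; first exact: is_linear_val_comp.
by rewrite /= gt.
Qed.

Lemma kahler_span (R : comPzRingType) (S : comNzRingType) (rho : R -> S)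
    (Om : lmodType S) (d : S -> Om) :
  is_kahler rho d -> forall z, span (fun w => exists b, w = d b) z.
Proof.
case=> dder duniv; set G := fun w => exists b, w = d b.
have dG b : d b \in in_span G by apply/in_spanP/spanG; exists b.
have gder : is_derivation rho (fun b => SpanSub (dG b)).
  have [dD [dZ dM]] := dder; split=> [u v|]; [|split=> [r u|u v]];
    by apply: val_inj; rewrite /= ?dD ?dZ ?dM.
have [g [glin gd _]] := duniv _ _ gder.
have [g0 [_ _ did]] := duniv Om d dder.
apply: (span_of_val_id (g := g)) => z.
transitivity (g0 z); last by rewrite -(did (fun x => x)).
apply: (did (val \o g)) => [|b]; first exact: is_linear_val_comp.
by rewrite /= gd.
Qed.

Lemma tensor_kahler_span (R : comPzRingType) (S : comNzRingType) (rho : R -> S)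
    (Om W : lmodType S) (d : S -> Om) (tens : Om -> Om -> W) :
  is_kahler rho d -> is_tensor tens ->
  forall t, span (fun w => exists b c, w = tens (d b) (d c)) t.
Proof.
move=> dK tT t; have [[tl tr] _] := tT.
apply: (span_linear (f := fun w => w)) (tensor_span tT t) => // _ [x [y ->]].
apply: (span_linear (tl y)) (kahler_span dK x) => _ [b ->].
apply: (span_linear (tr (d b))) (kahler_span dK y) => _ [c ->].
by apply: spanG; exists b, c.
Qed.

Lemma ext_square_anti (S : pzRingType) (M E : lmodType S) (wedge : M -> M -> E) :
  is_ext_square wedge -> forall x y, wedge y x = - wedge x y.
Proof.
case=> [[wl wr] walt _] x y; apply/eqP; rewrite -addr_eq0 addrC; apply/eqP.
have := walt (x + y).
by rewrite (proj1 (wl _)) !(proj1 (wr _)) !walt add0r addr0.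
Qed.

Section TorsionOnTensors.
Variables (A : comPzRingType) (Om W E : lmodType A) (d : A -> Om).
Variables (tens : Om -> Om -> W) (wedge : Om -> Om -> E) (omega : W -> E).
Variables (TA : comAlgType A) (iota : Om -> TA) (OmT : lmodType TA).
Variables (d' : TA -> OmT) (T2 : comAlgType TA) (iota2 : OmT -> T2).
Variables (Tp : TA -> T2) (TT : comAlgType A) (i1 i2 : TA -> TT).
Variables (U' : TT -> T2) (m : W -> TT) (cA : T2 -> T2) (phi : T2 -> E).

Local Notation gen := (T2gen d iota d' iota2).
Local Notation monomial := (monomial2 (T2emb T2) gen).

Hypothesis omega_linear : is_linear omega.
Hypothesis omega_tens : forall x y, omega (tens x y) = wedge x y.
Hypothesis wedge_anti : forall x y, wedge y x = - wedge x y.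
Hypothesis Tp_mul : forall x y, Tp (x * y) = Tp x * Tp y.
Hypothesis Tp_alg : forall a : A, Tp a%:A = T2emb T2 a.
Hypothesis Tp_d : forall a, Tp (iota (d a)) = gen (GD' a).
Hypothesis i1_scale : forall (k : A) x, i1 (k *: x) = k *: i1 x.
Hypothesis U'_add : additive_map U'.
Hypothesis U'_tens : forall w v, U' (i1 w * i2 v) = Tp w * (v%:A : T2).
Hypothesis m_linear : is_linear m.
Hypothesis m_tens : forall x y, m (tens x y) = i1 (iota x) * i2 (iota y).
Hypothesis cA_add : additive_map cA.
Hypothesis cA_mul : forall x y, cA (x * y) = cA x * cA y.
Hypothesis cA_emb : forall a, cA (T2emb T2 a) = T2emb T2 a.
Hypothesis cA_d : forall a, cA (gen (GD a)) = gen (GD' a).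
Hypothesis cA_d' : forall a, cA (gen (GD' a)) = gen (GD a).
Hypothesis phi_add : additive_map phi.
Hypothesis phi_d_d' : forall a b c,
  phi (monomial a [:: GD b; GD' c]) = a *: wedge (d b) (d c).

Lemma monomial_pairE a x y : monomial a [:: x; y] = T2emb T2 a * gen x * gen y.
Proof. by rewrite /monomial2 !big_cons big_nil mulr1 mulrA. Qed.

Lemma U'_m_tens k b c :
  U' (m (k *: tens (d b) (d c))) = monomial k [:: GD c; GD' b].
Proof.
rewrite (proj2 m_linear) m_tens scalerAl -i1_scale U'_tens -[k *: _]mulr_algl.
by rewrite Tp_mul Tp_alg Tp_d monomial_pairE mulrAC.
Qed.

Lemma cA_U'_m_tens k b c :
  cA (U' (m (k *: tens (d b) (d c)))) = monomial k [:: GD b; GD' c].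
Proof. by rewrite U'_m_tens !monomial_pairE !cA_mul cA_emb cA_d cA_d' mulrAC. Qed.

Lemma twice_omega_span t :
  span (fun w => exists b c, w = tens (d b) (d c)) t ->
  omega t *+ 2 = phi (cA (U' (m t))) - phi (U' (m t)).
Proof.
have [omD omZ] := omega_linear; have [mD _] := m_linear.
elim=> [|k _ [b [c ->]]|x y _ IHx _ IHy].
- by rewrite !(additive_map0 mD, additive_map0 U'_add, additive_map0 cA_add)
    subrr (additive_map0 omD) mul0rn.
- rewrite cA_U'_m_tens U'_m_tens !phi_d_d' omZ omega_tens (wedge_anti (d b)).
  by rewrite scalerN opprK mulr2n.
- by rewrite omD mulrnDl IHx IHy mD U'_add cA_add !phi_add opprD addrACA.
Qed.

End TorsionOnTensors.

Theorem mainTheorem14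
  (R : comPzRingType) (A : comAlgType R)
  (* Kähler module Omega(A) over R with universal derivation d *)
  (Om : lmodType A) (d : A -> Om)
  (HOm : is_kahler (fun r : R => (r%:A : A)) d)
  (* Omega(A) (x)_A Omega(A) *)
  (W : lmodType A) (tens : Om -> Om -> W) (HW : is_tensor tens)
  (* Omega^2(A) = Omega(A) /\_A Omega(A) *)
  (E : lmodType A) (wedge : Om -> Om -> E) (HE : is_ext_square wedge)
  (* omega(alpha (x) beta) = alpha /\ beta *)
  (omega : W -> E)
  (Homega : is_linear omega /\ (forall x y, omega (tens x y) = wedge x y))
  (* the module connection *)
  (nabla : Om -> W) (Hnabla : is_module_connection d tens nabla)
  (* T(A) = Sym_A(Omega(A)) *)
  (TA : comAlgType A) (iota : Om -> TA) (HTA : is_sym_alg iota)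
  (* T^2(A) = T(T(A)) = Sym_{T(A)}(Omega(T(A))), d' the universal derivation *)
  (OmT : lmodType TA) (d' : TA -> OmT)
  (HOmT : is_kahler (fun r : R => ((r%:A : A)%:A : TA)) d')
  (T2 : comAlgType TA) (iota2 : OmT -> T2) (HT2 : is_sym_alg iota2)
  (* T(p_A) : T(A) -> T^2(A),  a |-> a,  d a |-> d' a *)
  (Tp : TA -> T2)
  (HTp : [/\ is_ring_map Tp,
             (forall a : A, Tp (a%:A) = T2emb T2 a) &
             (forall a : A, Tp (iota (d a)) = T2gen d iota d' iota2 (GD' a))])
  (* T(A) (x)_A T(A) *)
  (TT : comAlgType A) (i1 i2 : TA -> TT) (HTT : is_alg_tensor i1 i2)
  (* U' : T(A) (x)_A T(A) -> T^2(A),  w (x) v |-> T(p_A)(w) v *)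
  (U' : TT -> T2)
  (HU' : is_ring_map U' /\ (forall w v, U' (i1 w * i2 v) = Tp w * (v%:A : T2)))
  (* the inclusion Omega(A) (x)_A Omega(A) -> T(A) (x)_A T(A) *)
  (m : W -> TT)
  (Hm : is_linear m /\ (forall x y, m (tens x y) = i1 (iota x) * i2 (iota y)))
  (* horizontal part H_nabla of the associated affine connection *)
  (H : T2 -> TT)
  (HH : is_ring_map H /\
        (forall a : A, H (T2gen d iota d' iota2 (GDD a)) = m (nabla (d a))))
  (* the canonical flip c_A *)
  (cA : T2 -> T2)
  (HcA : [/\ is_ring_map cA,
             (forall a : A, cA (T2emb T2 a) = T2emb T2 a),
             (forall a : A, cA (T2gen d iota d' iota2 (GD a))
                            = T2gen d iota d' iota2 (GD' a)),
             (forall a : A, cA (T2gen d iota d' iota2 (GD' a))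
                            = T2gen d iota d' iota2 (GD a)) &
             (forall a : A, cA (T2gen d iota d' iota2 (GDD a))
                            = T2gen d iota d' iota2 (GDD a))])
  (* the map phi-hat : T^2(A) -> Omega^2(A) *)
  (phi : T2 -> E)
  (Hphi : [/\ additive_map phi,
              (forall a b c : A,
                 phi (monomial2 (T2emb T2) (T2gen d iota d' iota2) a
                                [:: GD b; GD' c]) = a *: wedge (d b) (d c)) &
              (forall (a : A) (s : seq (gen2 A)), ~ form_d_d' s ->
                 phi (monomial2 (T2emb T2) (T2gen d iota d' iota2) a s) = 0)]) :
  forall a : A,
    (omega (nabla (d a))) *+ 2
    = phi (torsionV cA U' H (T2gen d iota d' iota2 (GDD a))).
Proof.
move=> a; have [omega_linear omega_tens] := Homega.
have [[_ [Tp_mul _]] Tp_alg Tp_d] := HTp; have [[_ i1_scale] _ _] := HTT.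
have [[U'_add _] U'_tens] := HU'; have [m_linear m_tens] := Hm.
have [[cA_add [cA_mul _]] cA_emb cA_d cA_d' cA_dd] := HcA.
have [phi_add phi_d_d' _] := Hphi.
have twice_omega := twice_omega_span omega_linear omega_tens
  (ext_square_anti HE) Tp_mul Tp_alg Tp_d i1_scale U'_add U'_tens m_linear
  m_tens cA_add cA_mul cA_emb cA_d cA_d' phi_add phi_d_d'.
rewrite /torsionV cA_dd (proj2 HH) twice_omega ?(additive_mapB phi_add) //.
exact: tensor_kahler_span HOm HW _.
Qed.
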